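(* Let $\mathcal{S}_m\subset\mathcal{S}_n\subset\mathcal{T}$ be nested subsets of the training set with $m<n$ elements respectively, and let $L_m,L_n$ be their empirical losses. Then for every $\mathbf{w}\in\mathbb{R}^p$, $$\mathbb{E}\left[|L_n(\mathbf{w})-L_m(\mathbf{w})|\right]\le\frac{n-m}{n}\left(V_{n-m}+V_m\right).$$
   Context: Let $Z$ be a random variable with distribution $P$ on a space $\mathcal{Z}$ and $f:\mathbb{R}^p\times\mathcal{Z}\to\mathbb{R}$ a loss function, with expected loss $L(\mathbf{w})=\mathbb{E}_Z[f(\mathbf{w},Z)]$. The training set $\mathcal{T}=\{z_1,\dots,z_N\}$ consists of $N$ independent samples from $P$. For a (fixed, data-independent) subset $\mathcal{S}\subseteq\mathcal{T}$ with $k$ elements, $L_{\mathcal{S}}(\mathbf{w})=\frac1k\sum_{z\in\mathcal{S}}f(\mathbf{w},z)$; for the sets $\mathcal{S}_k$ we write $L_k=L_{\mathcal{S}_k}$. Standing assumption: there are constants $V_k$ such that for every $k$ and every set $\mathcal{S}$ of $k$ independent samples from $P$, $\mathbb{E}[\sup_{\mathbf{w}\in\mathbb{R}^p}|L(\mathbf{w})-L_{\mathcal{S}}(\mathbf{w})|]\le V_k$ (expectation over the samples). *)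

From HB Require Import structures.
From mathcomp Require Import all_boot all_order all_algebra.
From mathcomp Require Import all_classical all_reals all_analysis.
Set Implicit Arguments. Unset Strict Implicit. Unset Printing Implicit Defensive.
Import Order.TTheory GRing.Theory Num.Theory.
Local Open Scope classical_set_scope.
Local Open Scope ring_scope.

Definition iid_samples (R : realType) (d : measure_display) (Omega : measurableType d)
  (Pr : probability Omega R) (d' : measure_display) (Zsp : measurableType d')
  (P : probability Zsp R) (k : nat) (X : 'I_k -> Omega -> Zsp) : Prop :=
  [/\ (forall i, measurable_fun setT (X i)),
      (forall i (A : set Zsp), measurable A -> Pr (X i @^-1` A) = P A) &
      (forall A : 'I_k -> set Zsp, (forall i, measurable (A i)) ->
         Pr (\bigcap_(i in [set: 'I_k]) (X i @^-1` A i)) =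
         (\prod_(i < k) Pr (X i @^-1` A i))%E)].

(* Expected loss L(w) = E_Z[f(w,Z)] (f w is assumed P-integrable). *)
Definition exp_loss (R : realType) (d' : measure_display) (Zsp : measurableType d')
  (P : probability Zsp R) (p : nat) (f : 'rV[R]_p -> Zsp -> R) (w : 'rV[R]_p) : R :=
  fine (\int[P]_z (f w z)%:E).

Definition emp_loss (R : realType) (d : measure_display) (Omega : measurableType d)
  (d' : measure_display) (Zsp : measurableType d') (p : nat)
  (f : 'rV[R]_p -> Zsp -> R) (k : nat) (X : 'I_k -> Omega -> Zsp)
  (S : {set 'I_k}) (w : 'rV[R]_p) (x : Omega) : R :=
  (#|S|%:R)^-1 * \sum_(i in S) f w (X i x).

From HB Require Import structures.
From mathcomp Require Import all_boot all_order all_algebra.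
From mathcomp Require Import all_classical all_reals all_analysis.
From mathcomp Require Import measurable_realfun.
From mathcomp.algebra_tactics Require Import ring.
Import Order.TTheory GRing.Theory Num.Theory.
Local Open Scope classical_set_scope.
Local Open Scope ring_scope.

(* Write S_n as the disjoint union of S_m and D := S_n \ S_m, with |D| = n - m.
   Then L_n = (m L_m + (n - m) L_D) / n, hence
     L_n - L_m = (n - m)/n * ((L - L_m) - (L - L_D)).
   Both D and S_m index families of independent samples from P, so by the
   standing assumption E|L(w) - L_D(w)| <= V_(n-m) and E|L(w) - L_m(w)| <= V_m;
   the triangle inequality and linearity of the expectation conclude. *)

(* Monotonicity of the integral of nonnegative functions without any
   measurability assumption: the supremum over w in the standing assumption is
   not known to be measurable. *)
Lemma ge0_le_integralT d (T : measurableType d) (R : realType)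
    (mu : {measure set T -> \bar R}) (f g : T -> \bar R) :
  (forall x, 0 <= f x)%E -> (forall x, f x <= g x)%E ->
  (\int[mu]_x f x <= \int[mu]_x g x)%E.
Proof.
move=> f0 fg; have g0 x : (0 <= g x)%E := le_trans (f0 x) (fg x).
rewrite !ge0_integralTE //; apply: ereal_sup_le => _ [h /= hf <-].
by exists h => //= x; exact: le_trans (hf x) (fg x).
Qed.

Lemma ge0_le_integral_scaleD {d} {T : measurableType d} {R : realType}
    (mu : {measure set T -> \bar R}) {g h1 h2 : T -> R} {c : R} :
  0 <= c -> measurable_fun setT g ->
  measurable_fun setT h1 -> measurable_fun setT h2 ->
  (forall x, 0 <= g x) -> (forall x, 0 <= h1 x) -> (forall x, 0 <= h2 x) ->
  (forall x, g x <= c * (h1 x + h2 x)) ->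
  (\int[mu]_x (g x)%:E
   <= c%:E * (\int[mu]_x (h1 x)%:E + \int[mu]_x (h2 x)%:E))%E.
Proof.
move=> c0 mg mh1 mh2 g0 h10 h20 gh.
rewrite -ge0_integralD //; [|by move=> x _; rewrite lee_fin|exact/measurable_EFinP
                           |by move=> x _; rewrite lee_fin|exact/measurable_EFinP].
under [X in (_ <= _ * X)%E]eq_integral do rewrite -EFinD.
rewrite -ge0_integralZl_EFin //; last 2 first.
  by move=> x _; rewrite lee_fin addr_ge0.
  exact/measurable_EFinP/measurable_funD.
apply: ge0_le_integral => //.
- by move=> x _; rewrite lee_fin.
- exact/measurable_EFinP.
- by apply/measurable_EFinP; apply: measurable_funM => //; exact: measurable_funD.
- by move=> x _; rewrite lee_fin.
Qed.

Lemma iid_samples_comp_inj (R : realType) (d : measure_display)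
    (Omega : measurableType d) (Pr : probability Omega R)
    (d' : measure_display) (Zsp : measurableType d') (P : probability Zsp R)
    (k N : nat) (z : 'I_N -> Omega -> Zsp) (g : 'I_k -> 'I_N) :
  injective g -> iid_samples Pr P z -> iid_samples Pr P (z \o g).
Proof.
move=> g_inj [mz lawz indz]; split=> [i|i|A mA]; [exact: mz | exact: lawz |].
(* Extend A along g by the trivial event outside the image of g. *)
pose B j := if [pick i | g i == j] is Some i then A i else setT.
have mB j : measurable (B j) by rewrite /B; case: pickP.
have Bg i : B (g i) = A i.
  by rewrite /B; case: pickP => [i' /eqP /g_inj -> //|/(_ i)]; rewrite eqxx.
have -> : \bigcap_(i in [set: 'I_k]) ((z \o g) i @^-1` A i) =
          \bigcap_(j in [set: 'I_N]) (z j @^-1` B j).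
  apply/seteqP; split=> x /= Ax j _ /=.
  - by rewrite /B; case: pickP => [i /eqP <-|//]; exact: Ax.
  - by rewrite -Bg; exact: Ax.
rewrite indz // (bigID (mem (g @: [set: 'I_k]%SET))) /=.
rewrite [X in (_ * X)%E]big1 ?mule1; last first.
  move=> j gj; rewrite /B; case: pickP => [i /eqP gij|_].
    by move: gj; rewrite -gij imset_f ?in_setT.
  by rewrite preimage_setT probability_setT.
rewrite big_imset /=; last by move=> ? ? _ _; exact: g_inj.
by apply: eq_big => [i|i _]; rewrite ?inE ?Bg.
Qed.

Section empirical_loss.
Variables (R : realType) (d : measure_display) (Omega : measurableType d).
Variables (d' : measure_display) (Zsp : measurableType d') (p : nat).
Variables (f : 'rV[R]_p -> Zsp -> R) (N : nat) (z : 'I_N -> Omega -> Zsp).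

Lemma emp_loss_enum_val (S : {set 'I_N}) w x :
  emp_loss f (z \o enum_val) [set: 'I_#|S|] w x = emp_loss f z S w x.
Proof.
rewrite /emp_loss cardsT card_ord (big_enum_val (fun i => f w (z i x))) /=.
by congr (_ * _); apply: eq_bigl => i; rewrite inE.
Qed.

Lemma measurable_emp_loss (S : {set 'I_N}) w :
  measurable_fun setT (f w) -> (forall i, measurable_fun setT (z i)) ->
  measurable_fun setT (emp_loss f z S w).
Proof.
move=> mf mz; apply: measurable_funM; first exact: measurable_cst.
under eq_fun do rewrite big_mkcond.
by apply: measurable_sum => i; case: (i \in S); [exact: measurableT_comp|].
Qed.

Lemma card_mul_emp_loss (S : {set 'I_N}) w x :
  #|S|%:R * emp_loss f z S w x = \sum_(i in S) f w (z i x).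
Proof.
have [/eqP|S_neq0] := eqVneq #|S| 0%N.
  by rewrite cards_eq0 => /eqP ->; rewrite cards0 mul0r big_set0.
by rewrite /emp_loss mulrA mulfV ?mul1r // pnatr_eq0.
Qed.

Lemma emp_lossB_subset (A B : {set 'I_N}) w x : A \subset B ->
  emp_loss f z B w x - emp_loss f z A w x =
  #|B :\: A|%:R / #|B|%:R * (emp_loss f z (B :\: A) w x - emp_loss f z A w x).
Proof.
move=> AB; have [B0|B_neq0] := eqVneq #|B| 0%N.
  have A0 : #|A| = 0%N by apply/eqP; rewrite -leqn0 -B0 subset_leq_card.
  by rewrite /emp_loss A0 B0 invr0 !(mulr0, mul0r) subrr.
have cardB : #|B|%:R = #|A|%:R + #|B :\: A|%:R :> R.
  by rewrite -natrD cardsDS // subnKC // subset_leq_card.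
have sumB : #|B|%:R * emp_loss f z B w x =
    #|A|%:R * emp_loss f z A w x + #|B :\: A|%:R * emp_loss f z (B :\: A) w x.
  rewrite !card_mul_emp_loss (bigID (mem A)) /=; congr (_ + _).
    by apply: eq_bigl => i; rewrite andb_idl // => /(fintype.subsetP AB).
  by apply: eq_bigl => i; rewrite inE andbC.
have BR : #|B|%:R != 0 :> R by rewrite pnatr_eq0.
apply: (mulfI BR); rewrite mulrBr sumB cardB.
by field; rewrite -cardB.
Qed.

End empirical_loss.

Section standing_assumption.
Variables (R : realType) (d : measure_display) (Omega : measurableType d).
Variables (Pr : probability Omega R) (d' : measure_display).
Variables (Zsp : measurableType d') (P : probability Zsp R) (p : nat).
Variables (f : 'rV[R]_p -> Zsp -> R) (V : nat -> R).
Hypothesis uniform_dev_le : forall k (X : 'I_k -> Omega -> Zsp),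
  (0 < k)%N -> iid_samples Pr P X ->
  (\int[Pr]_x ereal_sup [set `|exp_loss P f w - emp_loss f X [set: 'I_k] w x|%:E
                        | w in [set: 'rV[R]_p]] <= (V k)%:E)%E.

Lemma expected_emp_loss_dev_le (N : nat) (z : 'I_N -> Omega -> Zsp)
    (S : {set 'I_N}) w :
  iid_samples Pr P z -> (0 < #|S|)%N ->
  (\int[Pr]_x `|exp_loss P f w - emp_loss f z S w x|%:E <= (V #|S|)%:E)%E.
Proof.
move=> iid_z S_gt0.
have iid_S : iid_samples Pr P (z \o @enum_val _ (mem S)).
  by apply: iid_samples_comp_inj iid_z; exact: enum_val_inj.
apply: le_trans (uniform_dev_le _ _ S_gt0 iid_S); apply: ge0_le_integralT => x //.
by apply: ereal_sup_ubound; exists w => //; rewrite emp_loss_enum_val.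
Qed.

End standing_assumption.

Theorem lemma5 (R : realType) (d : measure_display) (Omega : measurableType d)
  (Pr : probability Omega R) (d' : measure_display) (Zsp : measurableType d')
  (P : probability Zsp R) (p : nat) (f : 'rV[R]_p -> Zsp -> R)
  (V : nat -> R) (N : nat) (z : 'I_N -> Omega -> Zsp)
  (Sm Sn : {set 'I_N}) (m n : nat) :
  (* f(w, .) is measurable and P-integrable, so L(w) is a well-defined real *)
  (forall w, measurable_fun setT (f w)) ->
  (forall w, P.-integrable setT (fun u => (f w u)%:E)) ->
  (* standing assumption: E[sup_w |L(w) - L_S(w)|] <= V_k for every set S of
     k >= 1 independent samples from P *)
  (forall k (X : 'I_k -> Omega -> Zsp), (0 < k)%N -> iid_samples Pr P X ->
     (\int[Pr]_x ereal_sup [set `|exp_loss P f w - emp_loss f X [set: 'I_k] w x|%:E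
                           | w in [set: 'rV[R]_p]]
     <= (V k)%:E)%E) ->
  (* the training set consists of N independent samples from P *)
  iid_samples Pr P z ->
  (* nested subsets S_m \subset S_n of the training set with m < n elements *)
  Sm \subset Sn -> #|Sm| = m -> #|Sn| = n -> (0 < m)%N -> (m < n)%N ->
  forall w : 'rV[R]_p,
    (\int[Pr]_x (`|emp_loss f z Sn w x - emp_loss f z Sm w x|)%:E
    <= (((n - m)%:R / n%:R) * (V (n - m)%N + V m))%:E)%E.
Proof.
move=> mf _ uniform_dev_le iid_z SmSn cardSm cardSn m_gt0 mn w.
set D := Sn :\: Sm.
have cardD : #|D| = (n - m)%N by rewrite cardsDS // cardSn cardSm.
have [mz _ _] := iid_z.
have mL S : measurable_fun setT (emp_loss f z S w) by exact: measurable_emp_loss.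
pose dev S x := `|exp_loss P f w - emp_loss f z S w x|.
have mdev S : measurable_fun setT (dev S).
  by apply: measurableT_comp => //; exact: measurable_funB.
have mdiff : measurable_fun setT
    (fun x => `|emp_loss f z Sn w x - emp_loss f z Sm w x|).
  by apply: measurableT_comp => //; exact: measurable_funB.
have c_ge0 : 0 <= (n - m)%:R / n%:R :> R by rewrite divr_ge0.
have diff_le x : `|emp_loss f z Sn w x - emp_loss f z Sm w x|
                 <= (n - m)%:R / n%:R * (dev D x + dev Sm x).
  rewrite emp_lossB_subset // cardD cardSn normrM ger0_norm // ler_wpM2l //.
  by rewrite /dev [X in _ <= X + _]distrC; exact: ler_distD.
apply: le_trans (ge0_le_integral_scaleD Pr c_ge0 mdiff (mdev D) (mdev Sm)
  (fun=> normr_ge0 _) (fun=> normr_ge0 _) (fun=> normr_ge0 _) diff_le) _.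
rewrite [X in (_ <= X)%E]EFinM EFinD lee_wpmul2l ?lee_fin // -cardD -cardSm.
apply: leeD; rewrite /dev; apply: expected_emp_loss_dev_le => //.
  by rewrite cardD subn_gt0.
by rewrite cardSm.
Qed.
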